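(* Let $k$ be a field, $A,B$ abelian groups, $R$ an $A$-graded and $S$ a $B$-graded finite-dimensional Frobenius $k$-algebra with forms $\langle-,-\rangle_R$, $\langle-,-\rangle_S$ and Nakayama automorphisms $\nu_R,\nu_S$, and $t:A\otimes B\to k^\times$ a bicharacter. Suppose there exist $\sigma_R\in A$, $\sigma_S\in B$ such that for homogeneous $r,r'\in R$, $\langle r,r'\rangle_R\ne0$ implies $|r|+|r'|+\sigma_R=0$, and for homogeneous $s,s'\in S$, $\langle s,s'\rangle_S\neq0$ implies $|s|+|s'|+\sigma_S=0$. Then: (1) $\nu_R$ and $\nu_S$ preserve the gradings; (2) the map $R\otimes^tS\to D(R\otimes^tS)[(\sigma_R,\sigma_S)]$, $x\mapsto\langle x,-\rangle$, is graded (of degree zero), where $\langle-,-\rangle$ is the form $\langle r\otimes s,r'\otimes s'\rangle=t(|r'|,|s|)\langle r,r'\rangle_R\langle s,s'\rangle_S$ on $R\otimes^tS$; equivalently, for homogeneous $r,a\in R$, $s,b\in S$, $\langle r\otimes s,a\otimes b\rangle\neq0$ implies $(|a|,|b|)=(-|r|-\sigma_R,-|s|-\sigma_S)$.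
   Context: $R\otimes^tS$ is $R\otimes S$ with product $(r\otimes s)(r'\otimes s')=t(|r'|,|s|)rr'\otimes ss'$; it is $A\oplus B$-graded. The Nakayama automorphism $\nu$ of a Frobenius algebra is defined by $\langle a,x\rangle=\langle x,\nu(a)\rangle$ for all $x$. For a $G$-graded space $V$, $D(V)=\operatorname{Hom}_k(V,k)$ is graded by $D(V)_g=\{\phi:\phi(v)=0$ for $v\notin V^{-g}\}$, and $V[\sigma]^g=V^{g+\sigma}$. *)

From HB Require Import structures.
From mathcomp Require Import all_boot all_order all_algebra all_field.
Set Implicit Arguments. Unset Strict Implicit. Unset Printing Implicit Defensive.
Import GRing.Theory.
Local Open Scope ring_scope.

(* A G-grading (G an abelian group = zmodType) of a finite-dimensional
   k-algebra R is a family of subspaces (R_g)_g such that R is their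
   direct sum and R_g R_h <= R_(g+h).  Homogeneous of degree g := in R_g. *)
Definition is_grading (K : fieldType) (G : zmodType) (R : falgType K)
    (V : G -> {vspace R}) : Prop :=
  [/\ (forall s : seq G, uniq s -> directv (\sum_(g <- s) V g)%VS),
      (forall x : R, exists s : seq G, x \in (\sum_(g <- s) V g)%VS)
    & (forall (g h : G) (x y : R), x \in V g -> y \in V h -> x * y \in V (g + h))].

Definition is_bilinear_form (K : fieldType) (R : falgType K) (f : R -> R -> K) : Prop :=
  (forall (a : K) (x y z : R), f (a *: x + y) z = a * f x z + f y z) /\
  (forall (a : K) (x y z : R), f z (a *: x + y) = a * f z x + f z y).

Definition is_frobenius_form (K : fieldType) (R : falgType K) (f : R -> R -> K) : Prop :=
  [/\ is_bilinear_form f,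
      (forall x : R, (forall y, f x y = 0) -> x = 0),
      (forall y : R, (forall x, f x y = 0) -> y = 0)
    & (forall x y z : R, f (x * y) z = f x (y * z))].

Definition is_nakayama (K : fieldType) (R : falgType K) (f : R -> R -> K) (nu : R -> R) : Prop :=
  forall a x : R, f a x = f x (nu a).

Definition is_bicharacter (K : fieldType) (A B : zmodType) (t : A -> B -> K) : Prop :=
  [/\ (forall a a' b, t (a + a') b = t a b * t a' b),
      (forall a b b', t a (b + b') = t a b * t a b')
    & (forall a b, t a b != 0)].

(* The form on R (x)^t S on pure tensors:
   <r (x) s, r' (x) s'> = t(|r'|,|s|) <r,r'>_R <s,s'>_S,
   where deg_r' = |r'| and deg_s = |s|. *)
Definition tens_form (K : fieldType) (A B : zmodType) (R S : falgType K)
    (t : A -> B -> K) (fR : R -> R -> K) (fS : S -> S -> K)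
    (r : R) (s : S) (deg_s : B) (r' : R) (deg_r' : A) (s' : S) : K :=
  t deg_r' deg_s * fR r r' * fS s s'.

From HB Require Import structures.
From mathcomp Require Import all_boot all_order all_algebra all_field.
Import GRing.Theory.
Local Open Scope ring_scope.

(* Write nu r = u + z with u in R_a and z in the sum of the other homogeneous
   components.  As <r, x> = <x, nu r>, a homogeneous x of degree h pairs
   nontrivially with nu r, or with u, only if h + a + sig = 0, while it pairs
   nontrivially with a component of z of degree g only if h + g + sig = 0,
   forcing g = a.  So z is orthogonal to every homogeneous x, hence z = 0 by
   nondegeneracy.  For (2), the tensor form is a product: if it is nonzero. *)

Section SumOfSubspaces.
Variables (K : fieldType) (vT : vectType K) (I : Type).

Lemma mem_sumv_ind (P : pred vT) (r : seq I) (Q : pred I)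
    (U : I -> {vspace vT}) (w : vT) :
  P 0 -> (forall u v, P u -> P v -> P (u + v)) ->
  (forall i u, Q i -> u \in U i -> P u) ->
  w \in (\sum_(i <- r | Q i) U i)%VS -> P w.
Proof.
move=> P0 PD PU; elim/big_ind: _ w => [w|V W PV PW w|i Qi u]; last exact: PU.
- by rewrite memv0 => /eqP ->.
- by case/memv_addP=> v /PV Pv [w' /PW Pw' ->]; apply: PD.
Qed.

Lemma mem_sumv_split (T : eqType) (U : T -> {vspace vT}) (r : seq T) a w :
  w \in (\sum_(i <- r) U i)%VS ->
  exists2 u, u \in U a & exists2 z, z \in (\sum_(i <- r | i != a) U i)%VS & w = u + z.
Proof.
have sub_a : (\sum_(i <- r | i == a) U i <= U a)%VS.
  by elim/big_ind: _ => [|V W|i /eqP ->]; rewrite ?sub0v // subv_add => ->.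
rewrite (bigID (fun i => i == a)) /= => /memv_addP [u Uu [z Zz ->]].
by exists u; [apply: subvP Uu | exists z].
Qed.

End SumOfSubspaces.

Arguments mem_sumv_ind {K vT I} P {r Q U w}.
Arguments mem_sumv_split {K vT T U r} a {w}.

Section BilinearForm.
Variables (K : fieldType) (R : falgType K) (f : R -> R -> K).
Hypothesis f_bilin : is_bilinear_form f.

Lemma formDl x y z : f (x + y) z = f x z + f y z.
Proof. by have [fl _] := f_bilin; rewrite -{1}[x]scale1r fl mul1r. Qed.

Lemma formDr x y z : f z (x + y) = f z x + f z y.
Proof. by have [_ fr] := f_bilin; rewrite -{1}[x]scale1r fr mul1r. Qed.

Lemma form0l z : f 0 z = 0.
Proof. by apply: (addrI (f 0 z)); rewrite -formDl !addr0. Qed.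

Lemma form0r z : f z 0 = 0.
Proof. by apply: (addrI (f z 0)); rewrite -formDr !addr0. Qed.

Variables (G : zmodType) (V : G -> {vspace R}).

Lemma form_eq0_sumvl (P : pred G) r x w :
  w \in (\sum_(g <- r | P g) V g)%VS ->
  (forall g v, P g -> v \in V g -> f v x = 0) -> f w x = 0.
Proof.
move=> Ww Vx; apply/eqP; move: Ww; apply: (mem_sumv_ind (fun w => f w x == 0)).
- by rewrite form0l.
- by move=> u v /= /eqP fu /eqP fv; rewrite formDl fu fv addr0.
- by move=> g v Pg Vv /=; rewrite (Vx g v Pg Vv).
Qed.

Lemma form_eq0_sumvr (P : pred G) r x w :
  w \in (\sum_(g <- r | P g) V g)%VS ->
  (forall g v, P g -> v \in V g -> f x v = 0) -> f x w = 0.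
Proof.
move=> Ww Vx; apply/eqP; move: Ww; apply: (mem_sumv_ind (fun w => f x w == 0)).
- by rewrite form0r.
- by move=> u v /= /eqP fu /eqP fv; rewrite formDr fu fv addr0.
- by move=> g v Pg Vv /=; rewrite (Vx g v Pg Vv).
Qed.

End BilinearForm.

Arguments formDr {K R f} f_bilin x y z.
Arguments form_eq0_sumvl {K R f} f_bilin {G V P r x w}.
Arguments form_eq0_sumvr {K R f} f_bilin {G V P r x w}.

Section GradedFrobenius.
Variables (K : fieldType) (R : falgType K) (f : R -> R -> K).
Variables (G : zmodType) (V : G -> {vspace R}) (sig : G).
Hypotheses (V_grading : is_grading V) (f_frob : is_frobenius_form f).
Hypothesis f_degree : forall a a' r r',
  r \in V a -> r' \in V a' -> f r r' != 0 -> a + a' + sig = 0.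

Let f_bilin : is_bilinear_form f. Proof. by case: f_frob. Qed.

Lemma nondegenerate_on_homog z : (forall h x, x \in V h -> f x z = 0) -> z = 0.
Proof.
move=> fz; have [_ _ f_nondeg _] := f_frob; apply: f_nondeg => y.
have [_ V_span _] := V_grading; have [r Vy] := V_span y.
by apply: (form_eq0_sumvl f_bilin Vy) => g v _; apply: fz.
Qed.

Lemma form_homog_eq0 a a' r r' :
  r \in V a -> r' \in V a' -> a + a' + sig != 0 -> f r r' = 0.
Proof.
by move=> Vr Vr' deg; apply/eqP; apply: contraNT deg => /(f_degree _ _ _ _ Vr Vr') ->.
Qed.

Lemma nakayama_homog nu : is_nakayama f nu -> forall a r, r \in V a -> nu r \in V a.
Proof.
move=> f_nak a r Vr; have [_ V_span _] := V_grading; have [s Vnu] := V_span (nu r).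
have [u Vu [z Vz nuE]] := mem_sumv_split a Vnu.
suff z0 : z = 0 by rewrite nuE z0 addr0.
apply: nondegenerate_on_homog => h x Vx.
have [deg|deg] := eqVneq (h + a + sig) 0.
- apply: (form_eq0_sumvr f_bilin Vz) => g v ga Vv.
  apply: form_homog_eq0 Vx Vv _; apply: contra ga => /eqP deg_g.
  by apply/eqP; apply: (addrI h); apply: (addIr sig); rewrite deg_g deg.
- have nu_x : f x (nu r) = 0.
    by rewrite -f_nak; apply: form_homog_eq0 Vr Vx _; rewrite (addrC a).
  have u_x : f x u = 0 by apply: form_homog_eq0 Vx Vu deg.
  by move: nu_x; rewrite nuE (formDr f_bilin) u_x add0r.
Qed.

End GradedFrobenius.

Arguments nakayama_homog {K R f G V sig} V_grading f_frob f_degree {nu}.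

Lemma dual_degree_eq {G : zmodType} {a a' sig : G} :
  a + a' + sig = 0 -> a' = - a - sig.
Proof. by move/eqP; rewrite addrAC addrC addr_eq0 opprD => /eqP. Qed.

Theorem mainTheorem4 (K : fieldType) (A B : zmodType) (R S : falgType K)
    (GR : A -> {vspace R}) (GS : B -> {vspace S})
    (fR : R -> R -> K) (fS : S -> S -> K) (nuR : R -> R) (nuS : S -> S)
    (t : A -> B -> K) (sigR : A) (sigS : B) :
  is_grading GR -> is_grading GS ->
  is_frobenius_form fR -> is_frobenius_form fS ->
  is_nakayama fR nuR -> is_nakayama fS nuS ->
  is_bicharacter t ->
  (forall (a a' : A) (r r' : R), r \in GR a -> r' \in GR a' ->
     fR r r' != 0 -> a + a' + sigR = 0) ->
  (forall (b b' : B) (s s' : S), s \in GS b -> s' \in GS b' ->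
     fS s s' != 0 -> b + b' + sigS = 0) ->
  ((forall (a : A) (r : R), r \in GR a -> nuR r \in GR a) /\
   (forall (b : B) (s : S), s \in GS b -> nuS s \in GS b)) /\
  (forall (ar a : A) (bs b : B) (r ra : R) (s sb : S),
     r \in GR ar -> ra \in GR a -> s \in GS bs -> sb \in GS b ->
     tens_form t fR fS r s bs ra a sb != 0 ->
     (a, b) = (- ar - sigR, - bs - sigS)).
Proof.
move=> gradR gradS frobR frobS nakR nakS _ degR degS.
split; first split.
- exact: (nakayama_homog gradR frobR degR nakR).
- exact: (nakayama_homog gradS frobS degS nakS).
- move=> ar a bs b r ra s sb Rr Rra Ss Ssb.
  rewrite /tens_form !mulf_eq0 !negb_or => /andP [/andP [_ fR_neq0] fS_neq0].
  by rewrite (dual_degree_eq (degR _ _ _ _ Rr Rra fR_neq0))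
             (dual_degree_eq (degS _ _ _ _ Ss Ssb fS_neq0)).
Qed.
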